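(* Let $C$ be a finite elementary abelian $p$-group ($p$ prime) and $k$ a positive integer; let $d=\log_p|C|$. Then there exists $t\ge k$ such that the direct product $P=\prod_{i=1}^tC_i$ of copies $C_i$ of $C$ contains a subgroup $R$, invariant under the diagonal action on $P$ of the endomorphism algebra $\mathrm{End}\,C\cong M_d(\mathbb{Z}/p\mathbb{Z})$, with the following properties: a) $R$ is contained in the union of the kernels $K_j$ of the natural projections $P\to C_j$, $j=1,\dots,t$; b) $R\cdot\prod_{j\notin J}C_j=P$ for every subset $J\subseteq\{1,\dots,t\}$ of cardinality $k$; b') moreover, every such $J$ is contained in a set $J'\supseteq J$ such that $P=R\times\prod_{j\notin J'}C_j$, and there exist integers $n_{ij}$ such that the projection $\pi:P\to\prod_{j\notin J'}C_j$ with kernel $R$ acts by $C_i\ni c_i\mapsto\prod_{j\notin J'}c_j^{n_{ij}}$, where $c_j\in C_j$ is the element corresponding to $c_i$ under the isomorphisms $C_i\cong C\cong C_j$. *)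

From HB Require Import structures.
From mathcomp Require Import all_boot all_order all_algebra all_fingroup all_solvable.
Set Implicit Arguments. Unset Strict Implicit. Unset Printing Implicit Defensive.

(* Direct power P = C_1 x ... x C_t of a finite group C (a subgroup of gT),
   realised as the set of functions 'I_t -> gT with values in C,
   with pointwise group operations. *)
Section DirectPower.
Variables (gT : finGroupType) (C : {set gT}) (t : nat).
Local Open Scope group_scope.

Definition dpow : {set {ffun 'I_t -> gT}} := [set f : {ffun 'I_t -> gT} | [forall j, f j \in C]].
Definition pw_mul (f g : {ffun 'I_t -> gT}) : {ffun 'I_t -> gT} := [ffun j => f j * g j].
Definition pw_inv (f : {ffun 'I_t -> gT}) : {ffun 'I_t -> gT} := [ffun j => (f j)^-1].
Definition pw_one : {ffun 'I_t -> gT} := [ffun => 1].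

Definition delta (i : 'I_t) (c : gT) : {ffun 'I_t -> gT} :=
  [ffun j => if j == i then c else 1].

Definition Kproj (j : 'I_t) : {set {ffun 'I_t -> gT}} := [set f in dpow | f j == 1].

Definition prod_out (J : {set 'I_t}) : {set {ffun 'I_t -> gT}} :=
  [set f in dpow | [forall j in J, f j == 1]].

Definition is_subgroup_dpow (R : {set {ffun 'I_t -> gT}}) : Prop :=
  [/\ R \subset dpow, pw_one \in R,
      {in R &, forall f g, pw_mul f g \in R} & {in R, forall f, pw_inv f \in R}].

Definition End_invariant (R : {set {ffun 'I_t -> gT}}) : Prop :=
  forall phi : gT -> gT,
    {in C &, {morph phi : x y / x * y}} -> {in C, forall x, phi x \in C} ->
    forall f : {ffun 'I_t -> gT}, f \in R -> [ffun j => phi (f j)] \in R.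

Definition prod_eq_P (A B : {set {ffun 'I_t -> gT}}) : Prop :=
  {in dpow, forall f, exists2 a, a \in A & exists2 b, b \in B & f = pw_mul a b}.
End DirectPower.

Definition zexp (gT : finGroupType) (x : gT) (z : int) : gT :=
  match z with
  | Posz m => (x ^+ m)%g
  | Negz m => ((x ^+ m.+1)^-1)%g
  end.

(* Identify C with F^d, F = 'F_p, put n = (d+1)(k+1), index the t = p^n - 1
   copies of C by the nonzero vectors of F^n, and let W be the space of
   functions on these vectors given by polynomials of degree at most k+1 that
   vanish at 0. Take for R the elements of P all of whose d coordinate
   functions lie in W (so R = W (x) C); an endomorphism of C acts on
   coordinates F-linearly, hence R is End C-invariant.
   a) The coordinates of r in R are given by d polynomials of total degree at
   most d(k+1) < n with the common zero 0; by Chevalley-Warning they have a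
   nonzero common zero j, i.e. r_j = 1.
   b, b') Products of affine polynomials give, for any k of the vectors,
   Lagrange functions in W, so J extends to a set J' on which restriction
   W -> F^J' is bijective. Injectivity gives R :&: Q = 1 and surjectivity
   R * Q = P, where Q = prod_(j not in J') C_j, and the projection along R onto
   Q maps c_i, for i in J', to (c_j ^ -w_i(j))_(j not in J'), where w_i is the
   Lagrange function of i. *)

From HB Require Import structures.
From mathcomp Require Import all_boot all_order all_algebra all_fingroup all_solvable.
From mathcomp Require Import finfield mxabelem boolp mpoly.

Set Implicit Arguments.
Unset Strict Implicit.
Unset Printing Implicit Defensive.

Import GRing.Theory.

Section MpolySize.
Variables (R : idomainType) (n : nat).
Implicit Types (P Q : {mpoly R[n]}).
Local Open Scope ring_scope.

Lemma msizeM_leq P Q a b :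
  (msize P <= a.+1 -> msize Q <= b.+1 -> msize (P * Q) <= (a + b).+1)%N.
Proof.
have [->|P0] := eqVneq P 0; first by rewrite mul0r msize0.
have [->|Q0] := eqVneq Q 0; first by rewrite mulr0 msize0.
rewrite msizeM // => lePa leQb; rewrite -ltnS prednK; last first.
  by rewrite addn_gt0 lt0n msize_poly_eq0 P0.
by rewrite -addSn -addnS leq_add.
Qed.

Lemma msize_prod_leq (I : finType) (A : {pred I}) (Q : I -> {mpoly R[n]}) (a : I -> nat) :
  (forall i, i \in A -> msize (Q i) <= (a i).+1)%N ->
  (msize (\prod_(i in A) Q i) <= (\sum_(i in A) a i).+1)%N.
Proof.
move=> leQa; apply: (big_ind2 (fun P s => msize P <= s.+1)%N) => //.
- by rewrite msize1.
- by move=> P1 s1 P2 s2; apply: msizeM_leq.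
Qed.

Lemma msizeX_leq P a e : (msize P <= a.+1 -> msize (P ^+ e) <= (e * a).+1)%N.
Proof.
move=> lePa; rewrite -(card_ord e) -prodr_const -sum_nat_const.
exact: msize_prod_leq.
Qed.
End MpolySize.

Section ChevalleyWarning.
Variable F : finFieldType.
Local Notation q := #|F|.
Local Open Scope ring_scope.

Lemma natf_card : q%:R = 0 :> F.
Proof.
have := expg_cardG (in_setT (1 : F)).
by rewrite cardsT FinRing.zmodXgE.
Qed.

Lemma expf_card_pred (x : F) : x != 0 -> x ^+ q.-1 = 1.
Proof.
move=> x0; apply: (mulfI x0); rewrite mulr1 -exprS prednK ?expf_card //.
by apply/card_gt0P; exists x.
Qed.

Lemma sum_expr_eq0 e : (e < q.-1)%N -> \sum_(x : F) x ^+ e = 0.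
Proof.
case: e => [|e] lt_e_q.
  by under eq_bigr do rewrite expr0; rewrite sumr_const natf_card.
have [y y0 ye] : exists2 y : F, y != 0 & y ^+ e.+1 != 1.
  have: ~~ all (e.+1).-unity_root (enum [pred y : F | y != 0]).
    apply/negP => /(max_unity_roots (ltn0Sn e))/(_ (enum_uniq _)).
    by rewrite -cardE cardC1 leqNgt lt_e_q.
  by case/allPn => y; rewrite mem_enum unity_rootE; exists y.
have: \sum_(x : F) x ^+ e.+1 = y ^+ e.+1 * \sum_(x : F) x ^+ e.+1.
  rewrite mulr_sumr (reindex_inj (mulfI y0)) /=.
  by apply: eq_bigr => x _; rewrite exprMn.
move/eqP; rewrite -subr_eq0 -{1}[\sum_x _]mul1r -mulrBl mulf_eq0 subr_eq0.
by rewrite eq_sym (negbTE ye) => /eqP.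
Qed.

(* A monomial of degree < n(q-1) has some exponent below q-1, and its sum over
   F^n factors through that of a single variable. *)
Lemma sum_meval_eq0 n (P : {mpoly F[n]}) :
  (msize P <= n * q.-1)%N -> \sum_(x : {ffun 'I_n -> F}) P.@[x] = 0.
Proof.
move=> leP; under eq_bigr do rewrite mevalE.
rewrite exchange_big big_seq big1 // => m mP /=.
have [i lt_mi] : exists i, (m i < q.-1)%N.
  apply/existsP; apply: contraTT (msize_mdeg_lt mP) => /existsPn ge_m.
  rewrite -leqNgt (leq_trans leP) // mdegE -{1}[n]card_ord -sum_nat_const.
  by apply: leq_sum => j _; rewrite leqNgt ge_m.
rewrite -mulr_sumr -(bigA_distr_bigA (fun i y => y ^+ m i)) /=.
by rewrite (bigD1 i) //= sum_expr_eq0 // mul0r mulr0.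
Qed.

Lemma chevalley_warning n m (P : 'I_m -> {mpoly F[n]}) :
  (\sum_l (msize (P l)).-1 < n)%N ->
  #|[set x : {ffun 'I_n -> F} | [forall l, (P l).@[x] == 0]]|%:R = 0 :> F.
Proof.
move=> deg_lt; pose h := \prod_l (1 - P l ^+ q.-1).
have q1_gt0 : (0 < q.-1)%N by rewrite -subn1 subn_gt0 finNzRing_gt1.
have h_ind (x : {ffun 'I_n -> F}) : h.@[x] = [forall l, (P l).@[x] == 0]%:R.
  rewrite /h rmorph_prod.
  have [/forallP P0 | /forallPn [l Pl]] := boolP [forall l, (P l).@[x] == 0].
    apply: big1 => l _; rewrite /= rmorphB rmorph1 rmorphXn /= (eqP (P0 l)).
    by rewrite expr0n eqn0Ngt q1_gt0 subr0.
  by rewrite (bigD1 l) //= rmorphB rmorph1 rmorphXn /= expf_card_pred ?subrr ?mul0r.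
have: \sum_(x : {ffun 'I_n -> F}) h.@[x] = 0.
  apply: sum_meval_eq0.
  apply: leq_trans (msize_prod_leq (a := fun l => q.-1 * (msize (P l)).-1)%N _) _.
    move=> l _; apply: leq_trans (msizeD_le _ _) _; rewrite msize1 msizeN geq_max /=.
    by rewrite msizeX_leq // leqSpred.
  by rewrite -big_distrr /= mulnC ltn_pmul2r.
rewrite (eq_bigr _ (fun x _ => h_ind x)) => sum_h0; rewrite -[RHS]sum_h0.
rewrite -sumr_const big_mkcond /=; apply: eq_bigr => x _.
by rewrite inE; case: forallP.
Qed.

Lemma chevalley_warning_nontrivial n m (P : 'I_m -> {mpoly F[n]}) :
  (\sum_l (msize (P l)).-1 < n)%N -> (forall l, (P l).@[0 : {ffun 'I_n -> F}] = 0) ->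
  exists2 x : {ffun 'I_n -> F}, x != 0 & forall l, (P l).@[x] = 0.
Proof.
move=> /chevalley_warning; set S := [set x | _] => cardS P0.
have S0 : 0 \in S by rewrite inE; apply/forallP => l; rewrite P0.
have: ~~ (S \subset [set 0 : {ffun 'I_n -> F}]).
  apply: contra (oner_neq0 F) => /subset_leq_card; rewrite cards1 => leS1.
  rewrite -cardS; suff -> : #|S| = 1%N by [].
  by apply/anti_leq; rewrite leS1 card_gt0; apply/set0Pn; exists 0.
case/subsetPn => x; rewrite !inE => /forallP Px x0.
by exists x => // l; apply/eqP.
Qed.
End ChevalleyWarning.

Section Interpolation.
Variables (F : fieldType) (I : finType) (W : submodClosed {ffun I -> F^o}).
Local Open Scope ring_scope.

Let regular_scaleE (a x : F^o) : a *: x = a * x. Proof. by []. Qed.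

Definition interpolating (S : {set I}) :=
  exists w : I -> {ffun I -> F^o},
    (forall i, i \in S -> w i \in W) /\ {in S &, forall i j, w i j = (i == j)%:R}.

(* Restriction to S is a bijection from W onto F^S. *)
Definition unisolvent (S : {set I}) :=
  interpolating S /\ forall v, v \in W -> {in S, forall j, v j = 0} -> v = 0.

Lemma interpolatingU1 S v b :
  interpolating S -> v \in W -> {in S, forall j, v j = 0} -> v b != 0 ->
  interpolating (b |: S).
Proof.
move=> [w [wW wS]] vW vS vb0.
have bS : b \notin S by apply: contra vb0 => /vS ->.
have [u [uW ub uS]] : exists u, [/\ u \in W, u b = 1 & {in S, forall j, u j = 0}].
  exists ((v b)^-1 *: v); split; first exact: rpredZ.
    by rewrite ffunE regular_scaleE mulVf.
  by move=> j jS; rewrite ffunE (vS j jS) scaler0.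
exists (fun i => if i == b then u else w i + (- w i b) *: u); split.
  move=> i; rewrite in_setU1; case: eqP => // _ /= iS.
  by rewrite rpredD ?rpredZ ?wW.
have neq_b l : l \in S -> (l == b) = false by move=> lS; apply: contraNF bS => /eqP <-.
move=> i j; rewrite !in_setU1 => /predU1P[-> | iS] /predU1P[-> | jS].
- by rewrite eqxx ub.
- by rewrite eqxx uS // eq_sym neq_b.
- by rewrite neq_b // !ffunE regular_scaleE ub mulr1 subrr.
- by rewrite neq_b // !ffunE regular_scaleE uS // mulr0 addr0 wS.
Qed.

Lemma interpolating_unisolvent S :
  interpolating S -> exists2 S' : {set I}, S \subset S' & unisolvent S'.
Proof.
elim: {S}_.+1 {-2}S (ltnSn #|~: S|) => // m IH S ltSm intS.
have [S_uni | /existsNP[v /not_implyP[vW /not_implyP[vS v_neq0]]]] :=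
  pselect (forall v, v \in W -> {in S, forall j, v j = 0} -> v = 0).
  by exists S.
have [b vb0] : exists b, v b != 0.
  apply/existsP; apply: contra_notT v_neq0 => /existsPn v0.
  by apply/ffunP => j; rewrite ffunE; apply/eqP/negPn.
have bS : b \notin S by apply: contra vb0 => /vS ->.
have [|S' sub uniS'] := IH (b |: S) _ (interpolatingU1 intS vW vS vb0).
  rewrite -ltnS (leq_trans _ ltSm) // ltnS -(ltn_add2l #|b |: S|) cardsC.
  by rewrite cardsU1 bS add1n addSn cardsC.
by exists S' => //; apply: subset_trans sub; apply: subsetUr.
Qed.
End Interpolation.

Section PolynomialFunctions.
Variables (F : finFieldType) (n : nat).
Local Notation vec := {ffun 'I_n -> F}.
Local Open Scope ring_scope.

Definition nonzero_vectors : {set vec} := [set~ (0 : vec)].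
Local Notation t := #|nonzero_vectors|.
Definition vector_at (j : 'I_t) : vec := enum_val j.

(* msize P is one more than the total degree of P. *)
Definition polyfun (D : nat) : {pred {ffun 'I_t -> F^o}} :=
  [pred w : {ffun 'I_t -> F^o} | `[< exists P : {mpoly F[n]},
     [/\ (msize P <= D.+1)%N, P.@[0 : vec] = 0 & forall j, w j = P.@[vector_at j]] >]].

Lemma polyfun_submod_closed D : submod_closed (polyfun D).
Proof.
split.
  by apply/asboolP; exists 0; split=> [||j]; rewrite ?msize0 ?meval0 ?ffunE.
move=> a u v /asboolP[P [leP P0 uP]] /asboolP[Q [leQ Q0 vQ]]; apply/asboolP.
exists (a *: P + Q); split.
- by rewrite (leq_trans (msizeD_le _ _)) // geq_max (leq_trans (msizeZ_le _ _)).
- by rewrite mevalD mevalZ P0 Q0 mulr0 addr0.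
- by move=> j; rewrite !ffunE mevalD mevalZ uP vQ.
Qed.

HB.instance Definition _ D :=
  GRing.isSubmodClosed.Build F {ffun 'I_t -> F^o} (polyfun D) (polyfun_submod_closed D).

Lemma leq_card_nonzero_vectors : (n <= t)%N.
Proof.
have q_gt1 := finNzRing_gt1 F.
rewrite cardsC1 card_ffun card_ord -ltnS prednK; first exact: ltn_expl.
by rewrite expn_gt0 ltnW.
Qed.

Lemma vector_at_neq0 j : vector_at j != 0.
Proof. by have := enum_valP j; rewrite !inE. Qed.

Lemma vector_atP x : x != 0 -> exists j, vector_at j = x.
Proof.
move=> x0; have xA : x \in nonzero_vectors by rewrite !inE.
by exists (enum_rank_in xA x); rewrite /vector_at enum_rankK_in.
Qed.

Lemma polyfun_common_zero d D : (d * D < n)%N ->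
  forall ws : 'I_d -> {ffun 'I_t -> F^o}, (forall c, ws c \in polyfun D) ->
  exists j, forall c, ws c j = 0.
Proof.
move=> lt_dD_n ws wsD.
have /fin_all_exists[P HP] := fun c => asboolP _ (wsD c).
have deg_lt : (\sum_c (msize (P c)).-1 < n)%N.
  apply: leq_ltn_trans lt_dD_n; rewrite -[X in (X * _)%N]card_ord -sum_nat_const.
  by apply: leq_sum => c _; case: (HP c) => leP _ _; rewrite -subn1 leq_subLR add1n.
have P0 c : (P c).@[0 : vec] = 0 by case: (HP c).
have [x x0 Px] := chevalley_warning_nontrivial deg_lt P0.
have [j xj] := vector_atP x0.
by exists j => c; case: (HP c) => _ _ ->; rewrite xj Px.
Qed.

(* The constant 1 when a = b, so that the products below may range over a set
   containing a. *)
Definition separating (a b : vec) : {mpoly F[n]} :=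
  if [pick l | a l != b l] is Some l then (a l - b l)^-1 *: ('X_l - (b l)%:MP) else 1.

Lemma msize_separating (a b : vec) : (msize (separating a b) <= 2)%N.
Proof.
rewrite /separating; case: pickP => [l _ | _]; last by rewrite msize1.
apply: leq_trans (msizeZ_le _ _) _; apply: leq_trans (msizeD_le _ _) _.
by rewrite msizeN msizeX mdeg1 geq_max msizeC; case: (b l != 0).
Qed.

Lemma separating_eq1 (a b : vec) : (separating a b).@[a] = 1.
Proof.
rewrite /separating; case: pickP => [l ab | _]; last exact: meval1.
by rewrite mevalZ mevalB mevalXU mevalC mulVf // subr_eq0.
Qed.

Lemma separating_eq0 (a b : vec) : a != b -> (separating a b).@[b] = 0.
Proof.
rewrite /separating; case: pickP => [l _ | ab]; last first.
  by case/eqP; apply/ffunP => l; apply/eqP/negbFE/ab.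
by rewrite mevalZ mevalB mevalXU mevalC subrr mulr0.
Qed.

Lemma polyfun_interpolating (J : {set 'I_t}) : interpolating (polyfun #|J|.+1) J.
Proof.
pose P i :=
  separating (vector_at i) 0 * \prod_(j in J) separating (vector_at i) (vector_at j).
exists (fun i => [ffun j => (P i).@[vector_at j]]); split.
  move=> i _; apply/asboolP; exists (P i); split=> [||j]; last by rewrite ffunE.
    apply: (@msizeM_leq _ _ _ _ 1); first exact: msize_separating.
    rewrite -[#|J|]sum1_card; apply: msize_prod_leq => j _; exact: msize_separating.
  by rewrite mevalM separating_eq0 ?mul0r ?vector_at_neq0.
move=> i j iJ jJ; rewrite ffunE mevalM rmorph_prod /=.
have [<- | ij] := eqVneq i j.
  by rewrite separating_eq1 mul1r big1 // => l _; apply: separating_eq1.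
rewrite (bigD1 j) //= separating_eq0 ?mul0r ?mulr0 //.
by apply: contra ij => /eqP/enum_val_inj ->.
Qed.
End PolynomialFunctions.

Lemma zexpN_nat (gT : finGroupType) (x : gT) (m : nat) :
  zexp x (- m%:Z)%R = (x ^+ m)^-1%g.
Proof. by case: m => [|m] /=; rewrite ?invg1. Qed.

Section TensorSubgroup.
Variables (gT : finGroupType) (C : {group gT}) (p d : nat).
Local Notation F := 'F_p.
Variables (coord : gT -> 'rV[F]_d) (uncoord : 'rV[F]_d -> gT).
Hypotheses (coordM : {in C &, {morph coord : x y / (x * y)%g >-> (x + y)%R}})
           (coord_inj : {in C &, injective coord})
           (uncoordP : forall v, uncoord v \in C)
           (uncoordK : cancel uncoord coord).
Local Open Scope group_scope.

Lemma coord1 : coord 1 = 0%R.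
Proof. by apply/(@addrI _ (coord 1))/esym; rewrite -coordM ?mulg1 ?addr0. Qed.

Lemma coord_eq1 x : x \in C -> coord x = 0%R -> x = 1.
Proof. by move=> xC x0; apply: coord_inj; rewrite ?coord1. Qed.

Lemma coordX x m : x \in C -> coord (x ^+ m) = (coord x *+ m)%R.
Proof.
move=> xC; elim: m => [|m IHm]; first by rewrite coord1.
by rewrite expgS coordM ?groupX // IHm mulrS.
Qed.

Lemma coordX_Fp x (a : F) : x \in C -> coord (x ^+ a) = (a *: coord x)%R.
Proof. by move=> xC; rewrite coordX // -scaler_nat natr_Zp. Qed.

Lemma coordV x : x \in C -> coord x^-1 = (- coord x)%R.
Proof.
by move=> xC; apply/eqP; rewrite -subr_eq0 opprK -coordM ?groupV // mulVg coord1.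
Qed.

Lemma coord_prod (I : Type) (r : seq I) (P : pred I) (h : I -> gT) :
  (forall i, P i -> h i \in C) ->
  \prod_(i <- r | P i) h i \in C
  /\ coord (\prod_(i <- r | P i) h i) = (\sum_(i <- r | P i) coord (h i))%R.
Proof.
move=> hC; apply: (big_ind2 (fun x v => x \in C /\ coord x = v)) => //.
- by rewrite group1 coord1.
- by move=> x1 v1 x2 v2 [x1C <-] [x2C <-]; rewrite groupM ?coordM.
- by move=> i /hC.
Qed.

Lemma uncoordD u v : uncoord (u + v)%R = uncoord u * uncoord v.
Proof. by apply: coord_inj; rewrite ?groupM // coordM // !uncoordK. Qed.

Lemma coord_End phi :
  {in C &, {morph phi : x y / x * y}} -> {in C, forall x, phi x \in C} ->
  {in C, forall x, coord (phi x) =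
     (\sum_c coord x ord0 c *: coord (phi (uncoord (delta_mx ord0 c))))%R}.
Proof.
move=> phiM phiC x xC; pose psi v := coord (phi (uncoord v)).
have psiD u v : psi (u + v)%R = (psi u + psi v)%R.
  by rewrite /psi uncoordD phiM // coordM ?phiC.
have psi0 : psi 0%R = 0%R by apply/(@addrI _ (psi 0%R)); rewrite -psiD !addr0.
(* an additive map between 'F_p-vector spaces is linear *)
have psiZ (a : F) v : psi (a *: v)%R = (a *: psi v)%R.
  rewrite -[a]natr_Zp !scaler_nat.
  by elim: (a : nat) => [|m IHm]; rewrite ?mulr0n // !mulrS psiD IHm.
have coordK : uncoord (coord x) = x by apply: coord_inj; rewrite ?uncoordK.
rewrite -{1}coordK -/(psi _) {1}[coord x]row_sum_delta (big_morph psi psiD psi0).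
by apply: eq_bigr => c _; rewrite psiZ.
Qed.

Variables (t : nat) (W : submodClosed {ffun 'I_t -> F^o}).

Definition coordfun (f : {ffun 'I_t -> gT}) (c : 'I_d) : {ffun 'I_t -> F^o} :=
  [ffun j => coord (f j) ord0 c].

Definition tensor : {set {ffun 'I_t -> gT}} :=
  [set f in dpow C t | [forall c, coordfun f c \in W]].

Lemma dpowP (f : {ffun 'I_t -> gT}) :
  reflect (forall j, f j \in C) (f \in dpow C t).
Proof. by rewrite inE; apply: forallP. Qed.

Lemma tensorP (f : {ffun 'I_t -> gT}) :
  reflect ((forall j, f j \in C) /\ forall c, coordfun f c \in W) (f \in tensor).
Proof. by rewrite inE; apply: (iffP andP) => -[/dpowP fC /forallP fW]. Qed.

Lemma pw_one_tensor : pw_one gT t \in tensor.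
Proof.
apply/tensorP; split=> [j | c]; first by rewrite ffunE.
rewrite (_ : coordfun _ c = 0%R) ?rpred0 //.
by apply/ffunP => j; rewrite !ffunE coord1 mxE.
Qed.

Lemma tensor_subgroup : is_subgroup_dpow C tensor.
Proof.
split; [ | exact: pw_one_tensor | | ].
- by apply/subsetP => f /tensorP[/dpowP].
- move=> f g /tensorP[fC fW] /tensorP[gC gW]; apply/tensorP.
  split=> [j | c]; first by rewrite ffunE groupM.
  rewrite (_ : coordfun _ c = coordfun f c + coordfun g c)%R ?rpredD //.
  by apply/ffunP => j; rewrite !ffunE coordM // mxE.
- move=> f /tensorP[fC fW]; apply/tensorP.
  split=> [j | c]; first by rewrite ffunE groupV.
  rewrite (_ : coordfun _ c = (-1) *: coordfun f c)%R ?rpredZ //.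
  by apply/ffunP => j; rewrite !ffunE coordV // mxE scaleN1r.
Qed.

Lemma tensor_End_invariant : End_invariant C tensor.
Proof.
move=> phi phiM phiC f /tensorP[fC fW]; apply/tensorP.
split=> [j | c']; first by rewrite ffunE phiC.
pose a c := coord (phi (uncoord (delta_mx ord0 c))) ord0 c'.
rewrite (_ : coordfun _ c' = \sum_c a c *: coordfun f c)%R; last first.
  apply/ffunP => j; rewrite !ffunE coord_End // summxE sum_ffunE.
  by apply: eq_bigr => c _; rewrite !ffunE mxE mulrC.
by apply: rpred_sum => c _; rewrite rpredZ.
Qed.

Lemma tensor_Kproj :
  (forall ws : 'I_d -> {ffun 'I_t -> F^o}, (forall c, ws c \in W) ->
     exists j, forall c, ws c j = 0%R) ->
  forall f, f \in tensor -> exists j, f \in Kproj C j.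
Proof.
move=> W_zero f /tensorP[fC /W_zero[j fj0]]; exists j.
rewrite inE (introT (dpowP f) fC); apply/eqP/coord_eq1 => //.
by apply/rowP => c; have := fj0 c; rewrite ffunE mxE.
Qed.

Implicit Types (S : {set 'I_t}) (w : 'I_t -> {ffun 'I_t -> F^o}) (h : 'I_t -> gT).

Definition interpolate S w h : {ffun 'I_t -> gT} :=
  [ffun j => \prod_(i in S) h i ^+ (w i j : F)].

Lemma coord_interpolate S w h j : {in S, forall i, h i \in C} ->
  interpolate S w h j \in C
  /\ coord (interpolate S w h j) = (\sum_(i in S) w i j *: coord (h i))%R.
Proof.
move=> hC; rewrite ffunE.
have [-> ->] := coord_prod (index_enum _) (fun i iS => groupX (w i j : F) (hC i iS)).
by split=> //; apply: eq_bigr => i iS; rewrite coordX_Fp ?hC.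
Qed.

Lemma interpolate_tensor S w h :
  (forall i, i \in S -> w i \in W) -> {in S, forall i, h i \in C} ->
  interpolate S w h \in tensor.
Proof.
move=> wW hC; apply/tensorP.
split=> [j | c]; first by case: (coord_interpolate w j hC).
rewrite (_ : coordfun _ c = \sum_(i in S) coord (h i) ord0 c *: w i)%R.
  by apply: rpred_sum => i iS; rewrite rpredZ ?wW.
apply/ffunP => j; rewrite ffunE (coord_interpolate w j hC).2 summxE sum_ffunE.
by apply: eq_bigr => i _; rewrite !ffunE mxE mulrC.
Qed.

Lemma interpolate_eq S w h :
  {in S &, forall i j, w i j = (i == j)%:R%R} -> {in S, forall i, h i \in C} ->
  {in S, forall j, interpolate S w h j = h j}.
Proof.
move=> wS hC j jS; have [interC interE] := coord_interpolate w j hC.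
apply: coord_inj => //; first exact: hC.
rewrite interE (bigD1 j) //= wS // eqxx scale1r big1 ?addr0 // => i /andP[iS ij].
by rewrite wS // (negbTE ij) scale0r.
Qed.

Lemma tensor_cap_prod_out S :
  unisolvent W S -> tensor :&: prod_out C S = [set pw_one gT t].
Proof.
move=> [_ uniS]; apply/setP => f; rewrite inE in_set1.
apply/andP/eqP => [[/tensorP[fC fW]] | ->].
  rewrite inE => /andP[_ /forallP f1]; apply/ffunP => j; rewrite ffunE.
  apply: coord_eq1 => //; apply/rowP => c; rewrite mxE.
  have fS : {in S, forall l, coordfun f c l = 0%R}.
    by move=> l lS; rewrite ffunE (eqP (implyP (f1 l) lS)) coord1 mxE.
  by have /ffunP/(_ j) := uniS _ (fW c) fS; rewrite !ffunE.
split; first exact: pw_one_tensor.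
rewrite inE; apply/andP; split; first by apply/dpowP => j; rewrite ffunE.
by apply/forallP => j; apply/implyP => _; rewrite ffunE.
Qed.

Lemma tensor_mul_prod_out S : interpolating W S -> prod_eq_P C tensor (prod_out C S).
Proof.
move=> [w [wW wS]] f /dpowP fC; pose g := interpolate S w f.
have fSC : {in S, forall i, f i \in C} by move=> i _.
have gC j : g j \in C by case: (coord_interpolate w j fSC).
exists g; first exact: interpolate_tensor.
exists [ffun j => (g j)^-1 * f j]; last by apply/ffunP => j; rewrite !ffunE mulKVg.
rewrite inE; apply/andP; split; first by apply/dpowP => j; rewrite ffunE groupM ?groupV.
by apply/forallP => j; apply/implyP => jS; rewrite ffunE interpolate_eq ?mulVg.
Qed.

Lemma tensor_projection S : interpolating W S ->
  exists n : 'I_t -> 'I_t -> int, forall i c, c \in C ->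
    pw_mul (delta i c) (pw_inv [ffun j => if j \in S then 1 else zexp c (n i j)])
      \in tensor.
Proof.
move=> [w [wW wS]].
exists (fun i j => if i \in S then (- (w i j : F)%:Z)%R else ((i == j) : nat)%:Z%R).
move=> i c cC; have deltaC l : delta i c l \in C by rewrite ffunE; case: eqP.
have [iS | iNS] := boolP (i \in S); last first.
  (* delta i c itself lies in prod_out C S *)
  rewrite (_ : pw_mul _ _ = pw_one gT t) ?pw_one_tensor //.
  apply/ffunP => j; rewrite !ffunE; have [-> | ji] := eqVneq j i.
    by rewrite (negbTE iNS) /= expg1 mulgV.
  by rewrite mul1g; case: (j \in S); rewrite /= ?expg0 invg1.
have deltaSC : {in S, forall l, delta i c l \in C} by move=> l _.
have coord_interE j : coord (interpolate S w (delta i c) j) = (w i j *: coord c)%R.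
  rewrite (coord_interpolate w j deltaSC).2 (bigD1 i) //= big1 ?addr0 => [|l /andP[_ li]].
    by rewrite ffunE eqxx.
  by rewrite ffunE (negbTE li) coord1 scaler0.
have gC j : (if j \in S then 1 else zexp c (- (w i j : F)%:Z)%R) \in C.
  by case: ifP; rewrite ?group1 // zexpN_nat groupV groupX.
rewrite (_ : pw_mul _ _ = interpolate S w (delta i c)); first exact: interpolate_tensor.
apply/ffunP => j; rewrite ffunE; apply: coord_inj.
- by rewrite !ffunE groupM ?groupV ?gC //; case: eqP.
- by case: (coord_interpolate w j deltaSC).
rewrite coord_interE !ffunE coordM ?groupV ?gC //; last by case: eqP.
have [jS | jNS] := boolP (j \in S).
  rewrite wS // invg1 coord1 addr0 eq_sym.
  by case: eqP => _; rewrite ?scale1r ?scale0r ?coord1.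
have ji : (j == i) = false by apply: contraNF jNS => /eqP ->.
by rewrite ji coord1 add0r zexpN_nat invgK coordX_Fp.
Qed.
End TensorSubgroup.

Lemma abelem_coordinates (gT : finGroupType) (C : {group gT}) p :
  (p.-abelem C)%g ->
  exists d (coord : gT -> 'rV['F_p]_d) (uncoord : 'rV['F_p]_d -> gT),
    [/\ {in C &, {morph coord : x y / (x * y)%g >-> (x + y)%R}},
        {in C &, injective coord}, forall v, uncoord v \in C & cancel uncoord coord].
Proof.
(* abelem_rV needs C != 1; the trivial group gets coordinates in 'rV_0. *)
move=> abelC; have [C1 | ntC] := eqVneq (C : {set gT}) 1%g.
  exists 0%N, (fun _ => 0%R), (fun _ => 1%g); split=> [x y _ _ | x y | v | v].
  - by rewrite addr0.
  - by rewrite C1 !inE => /eqP-> /eqP->.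
  - exact: group1.
  - by rewrite thinmx0.
exists (abelem_dim' (gval C)).+1, (abelem_rV abelC ntC), (rVabelem abelC ntC).
split; [exact: abelem_rV_M | exact: abelem_rV_inj | exact: mem_rVabelem |].
exact: rVabelemK.
Qed.

Theorem mainTheorem9 (gT : finGroupType) (C : {group gT}) (p : nat) (k : nat) :
  prime p -> (p.-abelem C)%g -> 0 < k ->
  exists t : nat, k <= t /\
  exists R : {set {ffun 'I_t -> gT}},
    [/\ is_subgroup_dpow C R,
        End_invariant C R,
        (* a) *)
        (forall r, r \in R -> exists j : 'I_t, r \in Kproj C j),
        (* b) *)
        (forall J : {set 'I_t}, #|J| = k -> prod_eq_P C R (prod_out C J))
      & (* b') *)
        (forall J : {set 'I_t}, #|J| = k ->
          exists J' : {set 'I_t},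
            [/\ J \subset J',
                R :&: prod_out C J' = [set pw_one gT t],
                prod_eq_P C R (prod_out C J')
              & exists n : 'I_t -> 'I_t -> int,
                  forall (i : 'I_t) (c : gT), c \in C ->
                    pw_mul (delta i c)
                         (pw_inv [ffun j => if j \in J' then 1%g else zexp c (n i j)])
                      \in R])].
Proof.
move=> _ abelC _.
have [d [coord [uncoord [coordM coord_inj uncoordP uncoordK]]]] := abelem_coordinates abelC.
pose n := (d.+1 * k.+1)%N; pose t := #|@nonzero_vectors 'F_p n|.
pose W := @polyfun 'F_p n k.+1.
have W_interpolating (J : {set 'I_t}) : #|J| = k -> interpolating W J.
  by move=> cardJ; rewrite /W -cardJ; apply: polyfun_interpolating.
exists t; split.
  by apply: leq_trans (leq_card_nonzero_vectors _ _); rewrite ltnW // leq_pmull.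
exists (tensor C coord W); split.
- exact: tensor_subgroup.
- exact: tensor_End_invariant.
- by apply: tensor_Kproj => //; apply: polyfun_common_zero; rewrite ltn_pmul2r.
- by move=> J /W_interpolating; apply: tensor_mul_prod_out.
move=> J /W_interpolating /interpolating_unisolvent[S JS [intS uniS]].
exists S; split=> //.
- exact: tensor_cap_prod_out.
- exact: tensor_mul_prod_out.
- exact: tensor_projection.
Qed.
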